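(* Let $G$ be a finite subset of $\mathbb{N}^2$ that has at least one connected h-bridge. If $G$ contains a connected component $C$ (of the full grid graph of $G$) such that $C\cap(\mathbb{N}\times\{t_G\})\neq\emptyset$ and $C\cap(\{l_G\}\times\mathbb{N})=\emptyset$, then there exists a point $\vec x_N\in G\setminus C$ such that $N(\vec x_N)\notin G$ and $\vec x_N\notin\mathbb{N}\times\{t_G\}$.
   Context: The full grid graph of $V\subseteq\mathbb{Z}^2$ has vertex set $V$ and an edge between $\vec x,\vec y$ iff $\|\vec x-\vec y\|=1$; paths and connected components are taken in this graph. For a finite $S\subseteq\mathbb{Z}^2$ let $l_S=\min_{(x,y)\in S}x$, $r_S=\max_{(x,y)\in S}x$, $b_S=\min_{(x,y)\in S}y$, $t_S=\max_{(x,y)\in S}y$. An h-bridge of $S$ is a subset of $S$ of the form $\{(l_S,y),(r_S,y)\}$; a v-bridge is a subset of $S$ of the form $\{(x,b_S),(x,t_S)\}$. A bridge is connected if there is a simple path in (the full grid graph of) $S$ connecting its two points. Directions: $N(x,y)=(x,y+1)$, $E(x,y)=(x+1,y)$, $S(x,y)=(x,y-1)$, $W(x,y)=(x-1,y)$. *)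

(* Points of N^2 are pairs (x, y) : nat * nat.
   A finite subset of N^2 is represented by a sequence G : seq (nat * nat)
   (membership x \in G; duplicates are irrelevant). *)
From mathcomp Require Import all_boot.
Set Implicit Arguments. Unset Strict Implicit. Unset Printing Implicit Defensive.

Definition point := (nat * nat)%type.

Definition dirN (p : point) : point := (p.1, p.2.+1).
Definition dirE (p : point) : point := (p.1.+1, p.2).

Definition gadj (u v : point) : bool :=
  ((u.1 == v.1) && ((u.2.+1 == v.2) || (v.2.+1 == u.2))) ||
  ((u.2 == v.2) && ((u.1.+1 == v.1) || (v.1.+1 == u.1))).

(* extremal coordinates (meaningful for nonempty S) *)
Definition lS (S : seq point) : nat :=
  foldr minn (head 0 (map fst S)) (map fst S).
Definition rS (S : seq point) : nat := foldr maxn 0 (map fst S).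
Definition bS (S : seq point) : nat :=
  foldr minn (head 0 (map snd S)) (map snd S).
Definition tS (S : seq point) : nat := foldr maxn 0 (map snd S).

Definition simple_path_in (S : seq point) (a b : point) (p : seq point) : bool :=
  [&& path gadj a p, last a p == b, uniq (a :: p) & all (fun z => z \in S) (a :: p)].

Definition connected_in (S : seq point) (a b : point) : Prop :=
  exists p, simple_path_in S a b p.

Definition is_hbridge (S : seq point) (y : nat) : Prop :=
  (lS S, y) \in S /\ (rS S, y) \in S.

Definition has_connected_hbridge (S : seq point) : Prop :=
  exists y, is_hbridge S y /\ connected_in S (lS S, y) (rS S, y).

Definition is_component (S : seq point) (C : pred point) : Prop :=
  exists x0, x0 \in S /\ forall y, C y <-> connected_in S x0 y.

From mathcomp Require Import all_boot.
From mathcomp Require Import zify.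
Set Implicit Arguments. Unset Strict Implicit.

(* Walk along the connected h-bridge from (l_G, y) to (r_G, y): by a discrete
   intermediate value argument it meets the column of a top-row point c of C
   at some point p. Since p is joined to (l_G, y), which lies off C, p is not
   in C. Climbing from p inside G as far as possible stays in the component of
   p and stops at a point x with N x outside G; x cannot be on the top row,
   for then it would be c. *)

Definition walk (S : seq point) (a b : point) : Prop :=
  exists p, [&& path gadj a p, last a p == b & all (fun z => z \in S) (a :: p)].

Lemma gadj_sym u v : gadj u v = gadj v u.
Proof.
by rewrite /gadj (eq_sym u.1) (eq_sym u.2) (orbC (u.2.+1 == v.2)) (orbC (u.1.+1 == v.1)).
Qed.

Lemma gadj_fst_leS u v : gadj u v -> v.1 <= u.1.+1.
Proof. by rewrite /gadj => /orP[] /andP[/eqP E /orP[] /eqP E']; lia. Qed.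

Lemma leq_foldr_maxn (s : seq nat) x : x \in s -> x <= foldr maxn 0 s.
Proof.
elim: s => //= a s IH; rewrite in_cons => /orP[/eqP->|/IH]; first exact: leq_maxl.
by move/leq_trans; apply; apply: leq_maxr.
Qed.

Lemma foldr_minn_leq (s : seq nat) d x : x \in s -> foldr minn d s <= x.
Proof.
elim: s => //= a s IH; rewrite in_cons => /orP[/eqP->|/IH]; first exact: geq_minl.
exact: leq_trans (geq_minr _ _).
Qed.

Section Bounds.
Variables (S : seq point) (z : point).
Hypothesis zS : z \in S.

Lemma lS_leq : lS S <= z.1.
Proof. exact/foldr_minn_leq/map_f. Qed.

Lemma leq_rS : z.1 <= rS S.
Proof. exact/leq_foldr_maxn/map_f. Qed.

Lemma leq_tS : z.2 <= tS S.
Proof. exact/leq_foldr_maxn/map_f. Qed.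

End Bounds.

Section Walks.
Variable S : seq point.

Lemma walk_refl a : a \in S -> walk S a a.
Proof. by move=> aS; exists [::]; rewrite /= aS eqxx. Qed.

Lemma walk1 a b : a \in S -> b \in S -> gadj a b -> walk S a b.
Proof. by move=> aS bS ab; exists [:: b]; rewrite /= ab aS bS eqxx. Qed.

Lemma walk_trans a b c : walk S a b -> walk S b c -> walk S a c.
Proof.
case=> p /and3P[pP /eqP pL pS] [q /and3P[qP /eqP qL /= /andP[_ qS]]].
exists (p ++ q); rewrite cat_path last_cat pL pP qP qL eqxx /=.
by move: pS; rewrite /= all_cat => /andP[-> ->].
Qed.

Lemma walk_in_head a b : walk S a b -> a \in S.
Proof. by case=> p /and3P[_ _ /andP[]]. Qed.

Lemma walk_in_last a b : walk S a b -> b \in S.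
Proof. by case=> p /and3P[_ /eqP <- /allP]; apply; apply: mem_last. Qed.

Lemma walk_connected a b : walk S a b -> connected_in S a b.
Proof.
case=> p /and3P[pP /eqP <- /allP pS].
case: (shortenP pP) => q qP qU qsub; exists q; apply/and4P; split=> //.
apply/allP=> z; rewrite in_cons => /predU1P[->|/qsub zp]; apply: pS.
  exact: mem_head.
by rewrite in_cons zp orbT.
Qed.

Lemma connected_walk a b : connected_in S a b -> walk S a b.
Proof. by case=> p /and4P[pP pL _ pS]; exists p; apply/and3P. Qed.

Lemma path_meets_column k a s :
  path gadj a s -> all (fun z => z \in S) (a :: s) -> a.1 <= k <= (last a s).1 ->
  exists2 z, z.1 = k & walk S z a.
Proof.
elim: s a => [|b s IH] a /=.
  move=> _ /andP[aS _] ak; exists a; first by apply/eqP; rewrite eqn_leq.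
  exact: walk_refl.
move=> /andP[ab sP] /and3P[aS bS sS] /andP[ak kl].
have [<-|ak'] := eqVneq a.1 k; first by exists a; last exact: walk_refl.
have bk : b.1 <= k by have := gadj_fst_leS ab; move/eqP: ak'; lia.
have [z zk zb] := IH b sP (introT andP (conj bS sS)) (introT andP (conj bk kl)).
by exists z => //; apply: walk_trans zb (walk1 bS aS _); rewrite gadj_sym.
Qed.

Lemma walk_down_column x j n :
  (forall i, i <= n -> (x, j + i) \in S) -> walk S (x, j + n) (x, j).
Proof.
elim: n => [|n IH] colS; first by rewrite addn0; apply/walk_refl; rewrite -[j]addn0 colS.
apply: walk_trans (IH (fun i ni => colS i (leqW ni))).
apply: walk1; [exact: colS | exact: colS (leqnSn n) |].
by rewrite /gadj /= eqxx addnS eqxx orbT.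
Qed.

Lemma climb_column p : p \in S ->
  exists2 m, walk S (p.1, p.2 + m) p & (p.1, (p.2 + m).+1) \notin S.
Proof.
case: p => x j /= pS.
have exit : exists m, (x, j + m.+1) \notin S.
  by exists (tS S - j); apply/negP => /leq_tS /=; have := leq_tS pS; lia.
case: (ex_minnP exit) => m mexit mmin.
have colS i : i <= m -> (x, j + i) \in S.
  case: i => [|i] im; first by rewrite addn0.
  by apply/negPn/negP => /mmin; lia.
by exists m; [apply: walk_down_column | rewrite -addnS].
Qed.

Lemma connected_hbridge_meets_column y z :
  connected_in S (lS S, y) (rS S, y) -> z \in S ->
  exists2 p, p.1 = z.1 & walk S p (lS S, y).
Proof.
case=> s /and4P[sP /eqP sL _ sS] zS.
by apply: path_meets_column sP sS _; rewrite sL lS_leq ?leq_rS.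
Qed.

End Walks.

Section Components.
Variables (S : seq point) (C : pred point).
Hypothesis compC : is_component S C.

Lemma component_sub u : C u -> u \in S.
Proof. by case: compC => x0 [_ Cx0] /Cx0 /connected_walk/walk_in_last. Qed.

Lemma component_walk_closed u v : C u -> walk S u v -> C v.
Proof.
case: compC => x0 [_ Cx0] /Cx0 /connected_walk x0u uv.
exact/Cx0/walk_connected/(walk_trans x0u uv).
Qed.

End Components.

Theorem mainTheorem3 (G : seq point) (C : pred point) :
  has_connected_hbridge G ->
  is_component G C ->
  (exists x, C x /\ x.2 = tS G) ->
  (forall x, C x -> x.1 <> lS G) ->
  exists xN : point,
    [/\ xN \in G, ~~ C xN, dirN xN \notin G & xN.2 <> tS G].
Proof.
move=> [y [_ bridge]] compC [c [Cc ct]] Cleft.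
have [p pc pl] := connected_hbridge_meets_column bridge (component_sub compC Cc).
have notCp : ~ C p by move=> /(component_walk_closed compC)/(_ pl)/Cleft.
have [m xp Nx] := climb_column (walk_in_head pl).
have notCx : ~ C (p.1, p.2 + m) by move=> /(component_walk_closed compC)/(_ xp)/notCp.
exists (p.1, p.2 + m); split=> //.
- exact: walk_in_head xp.
- exact/negP.
- by rewrite /dirN /= -ct => xt; apply: notCx; rewrite pc xt -surjective_pairing.
Qed.
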